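(* Let $A$ be a set of regular cardinals and let $\kappa\in\operatorname{spec}(A)$ with $\kappa<\sup(A)$. Then $\kappa\in\operatorname{spec}(A\cap(\kappa+1))$.
   Context: For a set $A$ of regular cardinals, $\prod A$ is the set of functions $f$ with domain $A$ and $f(a)\in a$ for all $a\in A$, ordered by pointwise domination: $f<g$ iff $f(a)<g(a)$ for all $a\in A$. A subset of $\prod A$ is bounded if some $g\in\prod A$ pointwise dominates all its members. For a directed poset $P$, $\operatorname{spec}(P)$ is the set of regular cardinals $\kappa$ with $P\geq_T\kappa$ (Tukey reducibility: there is a map $P\to\kappa$ sending cofinal sets to cofinal sets), and $\operatorname{spec}(A):=\operatorname{spec}(\prod A,<)$. Equivalently, a regular $\kappa$ is in $\operatorname{spec}(A)$ iff there is a set $\mathcal{F}\subseteq\prod A$ of size $\kappa$ such that every $\mathcal{F}_0\subseteq\mathcal{F}$ of size $\kappa$ is unbounded in $(\prod A,<)$. *)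

(* cardinals are modelled as initial well-orders. *)

Record WO := {
  car :> Type;
  ord : car -> car -> Prop;
  ord_wf : well_founded ord;
  ord_trans : forall x y z, ord x y -> ord y z -> ord x z;
  ord_total : forall x y, ord x y \/ x = y \/ ord y x
}.

Definition inj_le (X Y : Type) : Prop :=
  exists f : X -> Y, forall a b, f a = f b -> a = b.

Definition card_le (K L : WO) : Prop := inj_le K L.
Definition card_lt (K L : WO) : Prop := inj_le K L /\ ~ inj_le L K.

Definition is_cardinal (W : WO) : Prop :=
  forall x : W, ~ inj_le W {y : W | ord W y x}.

Definition unbounded (W : WO) (S : W -> Prop) : Prop :=
  forall x : W, exists y, S y /\ ord W x y.

Definition is_regular_cardinal (W : WO) : Prop :=
  is_cardinal W /\ inj_le nat W /\
  forall S : W -> Prop, unbounded W S -> inj_le W {y : W | S y}.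

(* A set of regular cardinals, given as an injectively indexed family. *)
Definition is_set_of_regular (I : Type) (A : I -> WO) : Prop :=
  (forall i, is_regular_cardinal (A i)) /\
  (forall i j, inj_le (A i) (A j) -> inj_le (A j) (A i) -> i = j).

Definition Prod (I : Type) (A : I -> WO) : Type := forall i : I, A i.
Definition prod_lt (I : Type) (A : I -> WO) (f g : Prod I A) : Prop :=
  forall i, ord (A i) (f i) (g i).

Definition cofinal (I : Type) (A : I -> WO) (X : Prod I A -> Prop) : Prop :=
  forall p : Prod I A, exists q, X q /\ prod_lt I A p q.

Definition tukey_ge (I : Type) (A : I -> WO) (K : WO) : Prop :=
  exists g : Prod I A -> K,
    forall X : Prod I A -> Prop, cofinal I A X ->
      unbounded K (fun b : K => exists q, X q /\ g q = b).

Definition in_spec (I : Type) (A : I -> WO) (K : WO) : Prop :=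
  is_regular_cardinal K /\ tukey_ge I A K.

(* A cap (K+1) : the members a of A with a <= K *)
Definition restrict_le (I : Type) (A : I -> WO) (K : WO) :
  {i : I | card_le (A i) K} -> WO :=
  fun j => A (proj1_sig j).

From Stdlib Require Import ClassicalEpsilon ChoiceFacts ProofIrrelevance FinFun.

Set Implicit Arguments.

(* A Tukey map [g : prod A -> K] yields, for every [b : K], a threshold [p b]
   such that [g q > b] whenever [q > p b] pointwise.  For [a] in [A] with
   [a > K], the [K] many values [p b a] are bounded in the regular cardinal
   [a]; freezing these coordinates at such a bound turns [g] into a Tukey map
   on the product over [A ∩ (K+1)]. *)

Lemma inj_le_trans (X Y Z : Type) : inj_le X Y -> inj_le Y Z -> inj_le X Z.
Proof.
  intros [f Hf] [g Hg]. exists (fun x => g (f x)). auto.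
Qed.

Lemma inj_le_image (J W : Type) (f : J -> W) : inj_le {y : W | exists j, f j = y} J.
Proof.
  exists (fun y : {y : W | exists j, f j = y} =>
    proj1_sig (constructive_indefinite_description _ (proj2_sig y))).
  intros [y Hy] [z Hz]; simpl.
  destruct (constructive_indefinite_description _ Hy) as [j <-].
  destruct (constructive_indefinite_description _ Hz) as [k <-]; simpl.
  intros ->. f_equal. apply proof_irrelevance.
Qed.

Section HilbertHotel.

Variable X : Type.

Definition swap (x y z : X) : X :=
  if excluded_middle_informative (z = x) then y
  else if excluded_middle_informative (z = y) then x else z.

Lemma swap_involutive (x y z : X) : swap x y (swap x y z) = z.
Proof.
  unfold swap.
  repeat destruct excluded_middle_informative; congruence.
Qed.

Lemma swap_eq_r {x y z : X} : swap x y z = y -> z = x.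
Proof.
  unfold swap.
  repeat destruct excluded_middle_informative; congruence.
Qed.

Variable e : nat -> X.
Hypothesis e_inj : Injective e.

Definition hotel (a : X) : X :=
  match excluded_middle_informative (exists n, e n = a) with
  | left H => e (S (proj1_sig (constructive_indefinite_description _ H)))
  | right _ => a
  end.

Lemma hotel_inj : Injective hotel.
Proof.
  intros a b; unfold hotel.
  destruct excluded_middle_informative as [Ha|Ha];
  destruct excluded_middle_informative as [Hb|Hb];
  try destruct (constructive_indefinite_description _ Ha) as [n <-];
  try destruct (constructive_indefinite_description _ Hb) as [k <-]; simpl.
  - intros E. apply e_inj in E. congruence.
  - intros <-. exfalso. eauto.
  - intros ->. exfalso. eauto.
  - auto.
Qed.

Lemma hotel_neq0 (a : X) : hotel a <> e 0.
Proof.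
  unfold hotel. destruct excluded_middle_informative as [Ha|Ha].
  - destruct (constructive_indefinite_description _ Ha) as [n <-]; simpl.
    intros E. apply e_inj in E. discriminate.
  - intros ->. eauto.
Qed.

End HilbertHotel.

Lemma inj_avoid_of_inj_le_nat (X : Type) (x0 : X) :
  inj_le nat X -> exists h : X -> X, Injective h /\ forall a, h a <> x0.
Proof.
  intros [e He].
  exists (fun a => swap (e 0) x0 (hotel e a)). split.
  - intros a b E.
    apply (f_equal (swap (e 0) x0)) in E. rewrite !swap_involutive in E.
    exact (hotel_inj He _ _ E).
  - intros a E. apply (hotel_neq0 He a), (swap_eq_r E).
Qed.

Lemma cardinal_no_max (W : WO) :
  is_cardinal W -> inj_le nat W -> forall x : W, exists y, ord W x y.
Proof.
  intros Hcard Hnat m. apply NNPP; intros Hmax.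
  assert (below_m : forall y, y <> m -> ord W y m).
  { intros y Hy. destruct (ord_total W y m) as [H|[H|H]];
      [exact H | contradiction | exfalso; eauto]. }
  destruct (inj_avoid_of_inj_le_nat m Hnat) as [h [Hinj Hm]].
  apply (Hcard m).
  exists (fun w => exist _ (h w) (below_m _ (Hm w))).
  intros a b E. apply Hinj. exact (f_equal (@proj1_sig _ _) E).
Qed.

Lemma regular_family_bounded (W : WO) (J : Type) :
  is_regular_cardinal W -> ~ inj_le W J ->
  forall f : J -> W, exists x, forall j, ord W (f j) x.
Proof.
  intros [Hcard [Hnat Hreg]] Hsmall f. apply NNPP; intros Hnb.
  assert (Hunb : unbounded W (fun y => exists j, f j = y)).
  { intros x. destruct (cardinal_no_max Hcard Hnat x) as [x' Hx'].
    destruct (not_all_ex_not _ _ (not_ex_all_not _ _ Hnb x')) as [j Hj].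
    exists (f j). split; [eauto |].
    destruct (ord_total W (f j) x') as [H|[->|H]];
      [contradiction | exact Hx' | exact (ord_trans W _ _ _ Hx' H)]. }
  apply Hsmall, (inj_le_trans (Hreg _ Hunb)), inj_le_image.
Qed.

Lemma tukey_threshold (I : Type) (A : I -> WO) (K : WO) (g : Prod I A -> K) :
  (forall X, cofinal I A X -> unbounded K (fun b => exists q, X q /\ g q = b)) ->
  forall b : K, exists p, forall q, prod_lt I A p q -> ord K b (g q).
Proof.
  intros Hg b. apply NNPP; intros Hn.
  assert (Hcof : cofinal I A (fun q => ~ ord K b (g q))).
  { intros p. apply NNPP; intros Hp. apply Hn. exists p. intros q Hq.
    apply NNPP; intros Hb. apply Hp. eauto. }
  destruct (Hg _ Hcof b) as [_ [[q [Hq <-]] Hb]]. contradiction.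
Qed.

Section Restriction.

Variables (I : Type) (A : I -> WO) (P : I -> Prop).

Definition glue (r : Prod {i | P i} (fun j => A (proj1_sig j)))
  (s : Prod {i | ~ P i} (fun j => A (proj1_sig j))) : Prod I A :=
  fun i => match excluded_middle_informative (P i) with
           | left h => r (exist _ i h)
           | right h => s (exist _ i h)
           end.

Lemma tukey_ge_restrict (K : WO) :
  tukey_ge I A K ->
  (forall i, ~ P i -> forall f : K -> A i, exists x, forall b, ord (A i) (f b) x) ->
  tukey_ge {i | P i} (fun j => A (proj1_sig j)) K.
Proof.
  intros [g Hg] Hbig.
  destruct (choice _ (tukey_threshold g Hg)) as [p Hp].
  destruct (non_dep_dep_functional_choice (@choice)
              (fun j : {i | ~ P i} => A (proj1_sig j))
              (fun j x => forall b, ord (A (proj1_sig j)) (p b (proj1_sig j)) x))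
    as [s Hs].
  { intros [i Hi]. exact (Hbig i Hi (fun b => p b i)). }
  exists (fun r => g (glue r s)).
  intros X HX b.
  destruct (HX (fun j => p b (proj1_sig j))) as [q [Xq Hq]].
  exists (g (glue q s)). split; [eauto |].
  apply Hp. intros i. unfold glue.
  destruct excluded_middle_informative as [h|h].
  - exact (Hq (exist _ i h)).
  - exact (Hs (exist _ i h) b).
Qed.

End Restriction.

Theorem lemma3p3 (I : Type) (A : I -> WO) (K : WO) :
  is_set_of_regular I A ->
  in_spec I A K ->
  (exists i : I, card_lt K (A i)) ->   (* K < sup A *)
  in_spec {i : I | card_le (A i) K} (restrict_le I A K) K.
Proof.
  intros [Hreg _] [HK Htukey] _.
  split; [exact HK |].
  apply tukey_ge_restrict; [exact Htukey |].
  intros i Hi. exact (regular_family_bounded (Hreg i) Hi).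
Qed.
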